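(* Let $c>0$, $k>0$, and $\beta\in(0,1)$, and put $v=\beta c$ and $\gamma=(1-\beta^2)^{-1/2}$. Let $r:[0,\pi]\to(0,\infty)$ be the radial function of an axially symmetric cavity boundary, where the boundary is the surface of revolution $\{\,r(\theta)\,\hat{\mathbf n}\;:\;\hat{\mathbf n}\in S^2,\ \hat{\mathbf n}\cdot\hat{\mathbf x}=\cos\theta\,\}$ about the $x$-axis, with $\hat{\mathbf x}$ the unit vector along the $x$-axis. For each $\theta\in[0,\pi]$ let $\Delta t_{\mathrm{out}}(\theta)$ be the positive root $t$ of $$(c^2-v^2)\,t^2-2\,r(\theta)\,v\cos\theta\;t-r(\theta)^2=0,$$ let $\Delta t_{\mathrm{ret}}(\theta)$ be the positive root $t$ of $$(c^2-v^2)\,t^2+2\,r(\theta)\,v\cos\theta\;t-r(\theta)^2=0,$$ and define the round-trip phase $\Phi(\theta)=c\,k\,\bigl(\Delta t_{\mathrm{out}}(\theta)+\Delta t_{\mathrm{ret}}(\theta)\bigr)$. Assume $\Phi(\theta)$ is independent of $\theta\in[0,\pi]$. Then, with $a_\perp:=r(\pi/2)$, $$r(\theta)=\frac{a_\perp\sqrt{1-\beta^2}}{\sqrt{1-\beta^2\sin^2\theta}}\qquad\text{for all }\theta\in[0,\pi].$$ Equivalently, the boundary is the ellipsoid of revolution $$\frac{x^2}{(a_\perp/\gamma)^2}+\frac{y^2+z^2}{a_\perp^2}=1,$$ whose longitudinal semiaxis is $a_\parallel:=r(0)=a_\perp/\gamma$; in particular $$\frac{a_\parallel}{a_\perp}=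\frac1\gamma=\sqrt{1-\beta^2}.$$
   Context: Physical setting: a medium at rest supports nondispersive waves ($\omega=ck$) propagating isotropically at speed $c$ in the medium's rest frame. A cavity moves uniformly through the medium with velocity $v\hat{\mathbf x}$, $v=\beta c$. The boundary is described in the medium frame by the distance $r(\theta)$ from the cavity center to the boundary along a direction making angle $\theta$ with the direction of motion $\hat{\mathbf x}$. $\Delta t_{\mathrm{out}}(\theta)$ is the travel time of a wave emitted from the moving center to reach the co-moving boundary point in direction $\theta$ (wavefront distance $c\,\Delta t$ equals the distance to the translated boundary point), and $\Delta t_{\mathrm{ret}}(\theta)$ is the travel time for the return from that boundary point to the moving center; the defining quadratics above encode exactly these pursuit conditions. The requirement that $\Phi$ be independent of $\theta$ is called spherical-harmonic phase closure. *)

From Stdlib Require Import Reals.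
Open Scope R_scope.

Definition lorentz_gamma (beta : R) : R := / sqrt (1 - beta ^ 2).

Definition is_dt_out (c v rth th t : R) : Prop :=
  0 < t /\ (c ^ 2 - v ^ 2) * t ^ 2 - 2 * rth * v * cos th * t - rth ^ 2 = 0.

Definition is_dt_ret (c v rth th t : R) : Prop :=
  0 < t /\ (c ^ 2 - v ^ 2) * t ^ 2 + 2 * rth * v * cos th * t - rth ^ 2 = 0.

(** The positive root [t] of [A t^2 - 2 b t - q = 0] satisfies [A t - b = sqrt (b^2 + A q)];
    the return root is the same with [b] replaced by [-b], so the round-trip time is
    [2 sqrt (b^2 + A q) / A], which with [A = c^2 - v^2], [b = r v cos th], [q = r^2] equals
    [2 r sqrt (c^2 - v^2 sin^2 th) / (c^2 - v^2)].  A constant phase therefore makes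
    [r(th)^2 (1 - beta^2 sin^2 th)] constant, i.e. equal to its value [a_perp^2 (1 - beta^2)]
    at [th = PI/2]; this is the polar equation of the ellipse with semiaxes
    [a_perp sqrt (1 - beta^2)] and [a_perp]. *)

From Stdlib Require Import Reals Lra Psatz.
Open Scope R_scope.

Lemma pos_root_closed_form (A b q t : R) :
  0 < A -> 0 <= q -> 0 < t -> A * t ^ 2 - 2 * b * t - q = 0 ->
  A * t - b = sqrt (b ^ 2 + A * q).
Proof.
  intros HA Hq Ht E.
  assert (HAt : 0 < A * t) by nra.
  assert (Hvertex : 0 <= A * t - 2 * b) by nra.
  rewrite <- (sqrt_pow2 (A * t - b)) by lra.
  f_equal.
  replace q with (A * t ^ 2 - 2 * b * t) by lra.
  ring.
Qed.

Lemma round_trip_time (c v rth th t1 t2 : R) :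
  v ^ 2 < c ^ 2 -> 0 <= rth ->
  is_dt_out c v rth th t1 -> is_dt_ret c v rth th t2 ->
  (c ^ 2 - v ^ 2) * (t1 + t2) = 2 * sqrt (rth ^ 2 * (c ^ 2 - v ^ 2 * sin th ^ 2)).
Proof.
  intros Hv Hr [Ht1 E1] [Ht2 E2].
  set (A := c ^ 2 - v ^ 2) in *.
  set (b := rth * v * cos th).
  assert (HA : 0 < A) by (unfold A; lra).
  assert (Hradicand : b ^ 2 + A * rth ^ 2 = rth ^ 2 * (c ^ 2 - v ^ 2 * sin th ^ 2)).
  { assert (Hcos : cos th ^ 2 = 1 - sin th ^ 2) by (pose proof (sin2_cos2 th); unfold Rsqr in *; lra).
    replace (b ^ 2) with (rth ^ 2 * v ^ 2 * cos th ^ 2) by (unfold b; ring).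
    rewrite Hcos; unfold A; ring. }
  assert (Hout : A * t1 - b = sqrt (b ^ 2 + A * rth ^ 2)).
  { apply pos_root_closed_form; [exact HA | apply pow2_ge_0 | exact Ht1 |].
    rewrite <- E1; unfold b; ring. }
  assert (Hret : A * t2 - - b = sqrt ((- b) ^ 2 + A * rth ^ 2)).
  { apply pos_root_closed_form; [exact HA | apply pow2_ge_0 | exact Ht2 |].
    rewrite <- E2; unfold b; ring. }
  replace ((- b) ^ 2) with (b ^ 2) in Hret by ring.
  rewrite <- Hradicand; lra.
Qed.

Lemma round_trip_time_inj (c v r1 r2 th1 th2 t1 t2 u1 u2 : R) :
  v ^ 2 < c ^ 2 -> 0 <= r1 -> 0 <= r2 ->
  is_dt_out c v r1 th1 t1 -> is_dt_ret c v r1 th1 t2 ->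
  is_dt_out c v r2 th2 u1 -> is_dt_ret c v r2 th2 u2 ->
  t1 + t2 = u1 + u2 ->
  r1 ^ 2 * (c ^ 2 - v ^ 2 * sin th1 ^ 2) = r2 ^ 2 * (c ^ 2 - v ^ 2 * sin th2 ^ 2).
Proof.
  intros Hv Hr1 Hr2 Ho1 Hr1' Ho2 Hr2' Hsum.
  assert (Hradicand_ge0 : forall rth th, 0 <= rth ^ 2 * (c ^ 2 - v ^ 2 * sin th ^ 2)).
  { intros rth th.
    assert (sin th ^ 2 <= 1) by (pose proof (SIN_bound th); nra).
    apply Rmult_le_pos; [apply pow2_ge_0 | nra]. }
  apply sqrt_inj; [apply Hradicand_ge0 .. |].
  pose proof (round_trip_time c v r1 th1 t1 t2 Hv Hr1 Ho1 Hr1') as T1.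
  pose proof (round_trip_time c v r2 th2 u1 u2 Hv Hr2 Ho2 Hr2') as T2.
  rewrite Hsum in T1; lra.
Qed.

Lemma radius_of_invariant (beta a rth th : R) :
  beta ^ 2 < 1 -> 0 <= a -> 0 <= rth ->
  rth ^ 2 * (1 - beta ^ 2 * sin th ^ 2) = a ^ 2 * (1 - beta ^ 2) ->
  rth = a * sqrt (1 - beta ^ 2) / sqrt (1 - beta ^ 2 * sin th ^ 2).
Proof.
  intros Hb Ha Hr H.
  assert (HD : 0 < 1 - beta ^ 2 * sin th ^ 2).
  { assert (sin th ^ 2 <= 1) by (pose proof (SIN_bound th); nra). nra. }
  assert (HsqrtD : 0 < sqrt (1 - beta ^ 2 * sin th ^ 2)) by (apply sqrt_lt_R0; exact HD).
  assert (Hmul : rth * sqrt (1 - beta ^ 2 * sin th ^ 2) = a * sqrt (1 - beta ^ 2)).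
  { rewrite <- (sqrt_pow2 rth Hr), <- (sqrt_pow2 a Ha).
    rewrite <- !sqrt_mult_alt by apply pow2_ge_0.
    now rewrite H. }
  rewrite <- Hmul; field; lra.
Qed.

Lemma ellipse_of_invariant (beta a rth th : R) :
  beta ^ 2 < 1 -> 0 < a ->
  rth ^ 2 * (1 - beta ^ 2 * sin th ^ 2) = a ^ 2 * (1 - beta ^ 2) ->
  (rth * cos th) ^ 2 / (a * sqrt (1 - beta ^ 2)) ^ 2 + (rth * sin th) ^ 2 / a ^ 2 = 1.
Proof.
  intros Hb Ha H.
  assert (Hcos : cos th ^ 2 = 1 - sin th ^ 2) by (pose proof (sin2_cos2 th); unfold Rsqr in *; lra).
  rewrite (Rpow_mult_distr a), pow2_sqrt by lra.
  replace ((rth * cos th) ^ 2) with (rth ^ 2 * (1 - sin th ^ 2)) by (rewrite <- Hcos; ring).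
  field_simplify_eq; [nra | lra].
Qed.

Lemma inv_lorentz_gamma (beta : R) : / lorentz_gamma beta = sqrt (1 - beta ^ 2).
Proof. apply Rinv_inv. Qed.

Theorem theorem1 (c k beta : R) (r dt_out dt_ret : R -> R)
  (hc : 0 < c) (hk : 0 < k) (hb0 : 0 < beta) (hb1 : beta < 1)
  (hr : forall th, 0 <= th <= PI -> 0 < r th)
  (hout : forall th, 0 <= th <= PI -> is_dt_out c (beta * c) (r th) th (dt_out th))
  (hret : forall th, 0 <= th <= PI -> is_dt_ret c (beta * c) (r th) th (dt_ret th))
  (hclosure : exists Phi0 : R, forall th, 0 <= th <= PI ->
       c * k * (dt_out th + dt_ret th) = Phi0) :
  let a_perp := r (PI / 2) in
  let gam := lorentz_gamma beta in
  (forall th, 0 <= th <= PI ->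
     r th = a_perp * sqrt (1 - beta ^ 2) / sqrt (1 - beta ^ 2 * (sin th) ^ 2)) /\
  (forall th, 0 <= th <= PI ->
     (r th * cos th) ^ 2 / (a_perp / gam) ^ 2 + (r th * sin th) ^ 2 / a_perp ^ 2 = 1) /\
  r 0 = a_perp / gam /\
  r 0 / a_perp = / gam /\
  r 0 / a_perp = sqrt (1 - beta ^ 2).
Proof.
  intros a gam.
  destruct hclosure as [Phi0 HPhi].
  assert (Hb : beta ^ 2 < 1) by nra.
  assert (Hv : (beta * c) ^ 2 < c ^ 2).
  { rewrite Rpow_mult_distr; assert (0 < c ^ 2) by nra; nra. }
  assert (Hpi2 : 0 <= PI / 2 <= PI) by (pose proof PI_RGT_0; lra).
  assert (H0 : 0 <= 0 <= PI) by (pose proof PI_RGT_0; lra).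
  assert (Ha : 0 < a) by (apply hr; exact Hpi2).
  assert (Hgam : a / gam = a * sqrt (1 - beta ^ 2)) by (unfold Rdiv, gam; now rewrite inv_lorentz_gamma).
  assert (Hinv : forall th, 0 <= th <= PI ->
            r th ^ 2 * (1 - beta ^ 2 * sin th ^ 2) = a ^ 2 * (1 - beta ^ 2)).
  { intros th Hth.
    assert (Hsum : dt_out th + dt_ret th = dt_out (PI / 2) + dt_ret (PI / 2)).
    { apply (Rmult_eq_reg_l (c * k)); [now rewrite !HPhi | nra]. }
    pose proof (round_trip_time_inj c (beta * c) (r th) a th (PI / 2) _ _ _ _
                  Hv (Rlt_le _ _ (hr th Hth)) (Rlt_le _ _ Ha)
                  (hout th Hth) (hret th Hth) (hout _ Hpi2) (hret _ Hpi2) Hsum) as E.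
    rewrite sin_PI2 in E.
    apply (Rmult_eq_reg_l (c ^ 2)); [| apply pow_nonzero; lra].
    replace (c ^ 2 * (r th ^ 2 * (1 - beta ^ 2 * sin th ^ 2)))
      with (r th ^ 2 * (c ^ 2 - (beta * c) ^ 2 * sin th ^ 2)) by ring.
    rewrite E; ring. }
  assert (Hradius : forall th, 0 <= th <= PI ->
            r th = a * sqrt (1 - beta ^ 2) / sqrt (1 - beta ^ 2 * sin th ^ 2)).
  { intros th Hth; apply radius_of_invariant; [exact Hb | lra | apply Rlt_le, hr, Hth | apply Hinv, Hth]. }
  assert (Hr0 : r 0 = a * sqrt (1 - beta ^ 2)).
  { rewrite (Hradius 0 H0), sin_0.
    replace (1 - beta ^ 2 * 0 ^ 2) with 1 by ring.
    rewrite sqrt_1; field. }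
  split; [exact Hradius | split; [| split; [| split]]].
  - intros th Hth; rewrite Hgam; now apply ellipse_of_invariant, Hinv.
  - now rewrite Hgam.
  - unfold gam; rewrite Hr0, inv_lorentz_gamma; field; lra.
  - rewrite Hr0; field; lra.
Qed.
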